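(* Let $\sigma$ be a set of atomic propositions, let $\bar P$ be a finite sequence of proposition symbols disjoint from $\sigma$ with underlying set $P$, and let $L\subseteq L_\mu[\sigma\cup P]$. Let $(M_1,M_2)$ be a weak directed $\sigma$-separation of a $\sigma$-structure $M$ with interface $\bar X=(x_1,\dots,x_k)$, where $|\bar P|\ge k$. Then there exist a $\sigma$-structure $M'$, a directed $\sigma$-separation $(M_1',M_2')$ of $M'$ with the same interface $\bar X$, and isomorphisms $\pi_1:M_1\to M_1'$ and $\pi_2:M_2\to M_2'$ that are the identity on $\{x_1,\dots,x_k\}$, such that $\mathrm{tp}_{L,\bar P}(M,v,\bar X)=\mathrm{tp}_{L,\bar P}(M',\pi_i(v),\bar X)$ for all $i\in\{1,2\}$ and all $v\in V(M_i)$.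
   Context: $L_\mu[\tau]$ is the modal $\mu$-calculus over propositions $\tau$: formulas from $\top,\bot$, $R,\neg R$, fixpoint variables, $\wedge,\vee,\Diamond,\Box,\mu,\nu$. They are evaluated on structures with edge relation, with $\Diamond/\Box$ ranging over successors. **Marked structures.** $\partial_{\bar P}(M,\bar X)$ expands $M$ so that $P_i$ holds exactly at $x_i$ for $i\le|\bar X|$, and nowhere for larger $i$. **Closures and types.** $\mathrm{CL}(L)$ is the union of the Fischer–Ladner closures of the formulas in $L$. $\mathrm{PT}_P(\varphi)$ is the set of formulas obtained by replacing each occurrence $\Diamond\chi$ by $(\bigvee_{R\in Q}R)\vee\Diamond\chi$ and each occurrence $\Box\chi$ by $(\bigwedge_{R\in Q}\neg R)\wedge\Box\chi$, for freely chosen sets $Q\subseteq P$ (chosen per occurrence). $\mathrm{CL}_P(L)=\bigcup_{\varphi\in\mathrm{CL}(L)}\mathrm{PT}_P(\varphi)$, and $\mathrm{tp}_{L,\bar P}(M,v,\bar X)=\{\varphi\in\mathrm{CL}_P(L):\partial_{\bar P}(M,\bar X),v\models\varphi\}$. **Weak directed separation.** A pair $(M_1,M_2)$ of induced substructures of $M$ is a weak directed $\sigma$-separation with interface $\bar X$ if: - $V(M)=V(M_1)\cup V(M_2)$; - $X=\{x_1,\dots,x_k\}\subseteq V(M_1)\cap V(M_2)$; - there are no edges from $V(M_2)\setminus(V(M_1)\cap V(M_2))$ to $V(M_1)\setminus(V(M_1)\cap V(M_2))$; - there are no edges from $(V(M_1)\cap V(M_2))\setminus X$ to $V(M_1)\setminus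 V(M_2)$. **Directed separation.** It is a (non-weak) directed separation if moreover $X=V(M_1)\cap V(M_2)$ and there are no edges from $V(M_2)\setminus X$ to $V(M_1)\setminus X$. *)

From mathcomp Require Import all_boot.
From Stdlib Require List.

Set Implicit Arguments.
Unset Strict Implicit.
Unset Printing Implicit Defensive.

(* Formulas are in negation normal form; fixpoint variables are named by nat. *)
Inductive form (A : Type) : Type :=
| FTop : form A
| FBot : form A
| FAt : A -> form A
| FNAt : A -> form A
| FVar : nat -> form A
| FAnd : form A -> form A -> form A
| FOr : form A -> form A -> form A
| FDia : form A -> form A
| FBox : form A -> form A
| FMu : nat -> form A -> form A
| FNu : nat -> form A -> form A.

Arguments FTop {A}. Arguments FBot {A}. Arguments FVar {A} _.

(* all atoms occurring in the formula satisfy p :  phi \in L_mu[p] *)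
Fixpoint atoms_in (A : Type) (p : A -> Prop) (f : form A) : Prop :=
  match f with
  | FTop | FBot | FVar _ => True
  | FAt R | FNAt R => p R
  | FAnd f1 f2 | FOr f1 f2 => atoms_in p f1 /\ atoms_in p f2
  | FDia g | FBox g | FMu _ g | FNu _ g => atoms_in p g
  end.

Record sstruct (A : Type) := SStruct {
  vert : Type;
  edge : vert -> vert -> Prop;
  lab : A -> vert -> Prop }.

Arguments vert {A} s.
Arguments edge {A} s _ _.
Arguments lab {A} s _ _.
Arguments SStruct {A} vert edge lab.

Definition upd {V : Type} (e : nat -> V -> Prop) (x : nat) (S : V -> Prop) :
  nat -> V -> Prop := fun y => if Nat.eqb y x then S else e y.

(* Semantics; mu = least fixpoint (intersection of prefixed points),
   nu = greatest fixpoint (union of postfixed points). *)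
Fixpoint sem (A : Type) (M : sstruct A) (e : nat -> vert M -> Prop) (f : form A)
  : vert M -> Prop :=
  match f with
  | FTop => fun _ => True
  | FBot => fun _ => False
  | FAt R => fun v => lab M R v
  | FNAt R => fun v => ~ lab M R v
  | FVar x => fun v => e x v
  | FAnd f1 f2 => fun v => sem e f1 v /\ sem e f2 v
  | FOr f1 f2 => fun v => sem e f1 v \/ sem e f2 v
  | FDia g => fun v => exists w, edge M v w /\ sem e g w
  | FBox g => fun v => forall w, edge M v w -> sem e g w
  | FMu x g => fun v => forall S : vert M -> Prop,
        (forall w, sem (upd e x S) g w -> S w) -> S v
  | FNu x g => fun v => exists S : vert M -> Prop,
        (forall w, S w -> sem (upd e x S) g w) /\ S v
  end.

Arguments sem {A} M e f _.

(* M, v |= phi  (free fixpoint variables are interpreted as the empty set) *)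
Definition sat (A : Type) (M : sstruct A) (f : form A) (v : vert M) : Prop :=
  sem M (fun _ _ => False) f v.

(* partial_{Pbar}(M, X): P_i holds exactly at x_i for i < |X|, nowhere for
   i >= |X|; all other atoms keep their interpretation in M. *)
Definition mark (A : Type) (M : sstruct A) (Pbar : seq A) (X : seq (vert M))
  : sstruct A :=
  @SStruct A (vert M) (edge M)
    (fun R v => (~ List.In R Pbar /\ lab M R v) \/
       exists i, i < size X /\ i < size Pbar /\
                 nth R Pbar i = R /\ nth v X i = v).

Arguments sat {A} M f v.
Arguments mark {A} M Pbar X.

Fixpoint subst (A : Type) (x : nat) (s : form A) (f : form A) : form A :=
  match f with
  | FVar y => if Nat.eqb y x then s else FVar y
  | FAnd f1 f2 => FAnd (subst x s f1) (subst x s f2)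
  | FOr f1 f2 => FOr (subst x s f1) (subst x s f2)
  | FDia g => FDia (subst x s g)
  | FBox g => FBox (subst x s g)
  | FMu y g => if Nat.eqb y x then FMu y g else FMu y (subst x s g)
  | FNu y g => if Nat.eqb y x then FNu y g else FNu y (subst x s g)
  | g => g
  end.

Inductive FL (A : Type) (phi : form A) : form A -> Prop :=
| FL_self : FL phi phi
| FL_andl f1 f2 : FL phi (FAnd f1 f2) -> FL phi f1
| FL_andr f1 f2 : FL phi (FAnd f1 f2) -> FL phi f2
| FL_orl f1 f2 : FL phi (FOr f1 f2) -> FL phi f1
| FL_orr f1 f2 : FL phi (FOr f1 f2) -> FL phi f2
| FL_dia g : FL phi (FDia g) -> FL phi g
| FL_box g : FL phi (FBox g) -> FL phi g
| FL_mu x g : FL phi (FMu x g) -> FL phi (subst x (FMu x g) g)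
| FL_nu x g : FL phi (FNu x g) -> FL phi (subst x (FNu x g) g).

Definition CL (A : Type) (L : form A -> Prop) (psi : form A) : Prop :=
  exists phi, L phi /\ FL phi psi.

Definition bigOr_with (A : Type) (Q : seq A) (base : form A) : form A :=
  foldr (fun R acc => FOr (FAt R) acc) base Q.
Definition bigAndN_with (A : Type) (Q : seq A) (base : form A) : form A :=
  foldr (fun R acc => FAnd (FNAt R) acc) base Q.

Inductive PT (A : Type) (Pbar : seq A) : form A -> form A -> Prop :=
| PT_top : PT Pbar FTop FTop
| PT_bot : PT Pbar FBot FBot
| PT_at R : PT Pbar (FAt R) (FAt R)
| PT_nat R : PT Pbar (FNAt R) (FNAt R)
| PT_var x : PT Pbar (FVar x) (FVar x)
| PT_and f1 f2 g1 g2 : PT Pbar f1 g1 -> PT Pbar f2 g2 ->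
    PT Pbar (FAnd f1 f2) (FAnd g1 g2)
| PT_or f1 f2 g1 g2 : PT Pbar f1 g1 -> PT Pbar f2 g2 ->
    PT Pbar (FOr f1 f2) (FOr g1 g2)
| PT_dia f g (Q : seq A) : PT Pbar f g -> (forall R, List.In R Q -> List.In R Pbar) ->
    PT Pbar (FDia f) (bigOr_with Q (FDia g))
| PT_box f g (Q : seq A) : PT Pbar f g -> (forall R, List.In R Q -> List.In R Pbar) ->
    PT Pbar (FBox f) (bigAndN_with Q (FBox g))
| PT_mu x f g : PT Pbar f g -> PT Pbar (FMu x f) (FMu x g)
| PT_nu x f g : PT Pbar f g -> PT Pbar (FNu x f) (FNu x g).

Definition CLP (A : Type) (Pbar : seq A) (L : form A -> Prop) (psi : form A) : Prop :=
  exists phi, CL L phi /\ PT Pbar phi psi.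

Definition tp (A : Type) (L : form A -> Prop) (Pbar : seq A)
  (M : sstruct A) (v : vert M) (X : seq (vert M)) (psi : form A) : Prop :=
  CLP Pbar L psi /\ sat (mark M Pbar X) psi v.

(* (M[S1], M[S2]) is a weak directed separation of M with interface X *)
Definition weak_dsep (A : Type) (M : sstruct A) (S1 S2 : vert M -> Prop)
  (X : seq (vert M)) : Prop :=
  [/\ (forall v, S1 v \/ S2 v),
      (forall x, List.In x X -> S1 x /\ S2 x),
      (forall u w, edge M u w -> S2 u -> ~ S1 u -> S1 w -> ~ S2 w -> False) &
      (forall u w, edge M u w -> S1 u -> S2 u -> ~ List.In u X ->
                   S1 w -> ~ S2 w -> False)].

Definition dsep (A : Type) (M : sstruct A) (S1 S2 : vert M -> Prop)
  (X : seq (vert M)) : Prop :=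
  [/\ @weak_dsep A M S1 S2 X,
      (forall v, S1 v -> S2 v -> List.In v X) &
      (forall u w, edge M u w -> S2 u -> ~ List.In u X ->
                   S1 w -> ~ List.In w X -> False)].

(* f restricted to S is a sigma-isomorphism of induced substructures
   M[S] -> M'[S'] *)
Definition iso_on (A : Type) (sigma : A -> Prop) (M M' : sstruct A)
  (S : vert M -> Prop) (S' : vert M' -> Prop) (f : vert M -> vert M') : Prop :=
  [/\ (forall v, S v -> S' (f v)),
      (forall u v, S u -> S v -> f u = f v -> u = v),
      (forall v', S' v' -> exists v, S v /\ f v = v'),
      (forall u v, S u -> S v -> (edge M u v <-> edge M' (f u) (f v))) &
      (forall R u, sigma R -> S u -> (lab M R u <-> lab M' R (f u)))].

Arguments tp {A} L Pbar M v X psi.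
Arguments weak_dsep {A} M S1 S2 X.
Arguments dsep {A} M S1 S2 X.
Arguments iso_on {A} sigma M M' S S' f.

From mathcomp Require Import all_boot.
From Stdlib Require List.
From Stdlib Require Import Classical ClassicalEpsilon ProofIrrelevance.

Set Implicit Arguments.
Unset Strict Implicit.

(* The vertices shared by both sides but outside the interface are duplicated:
   the original stays on the first side, the copy is put on the second side,
   and the edges leaving the second side towards a duplicated vertex are
   redirected to its copy.  This removes every forbidden edge, and the map
   forgetting the duplication is a bounded morphism which is injective over
   the interface; bounded morphisms preserve every mu-calculus formula, also
   after marking the interface, so all types are preserved. *)

Record bounded_morphism (A : Type) (N' N : sstruct A) (h : vert N' -> vert N)
  : Prop := BoundedMorphism {
  bmorph_forth : forall a b, edge N' a b -> edge N (h a) (h b);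
  bmorph_back : forall a w, edge N (h a) w -> exists b, edge N' a b /\ h b = w;
  bmorph_lab : forall R a, lab N' R a <-> lab N R (h a) }.

Lemma upd_mono (V : Type) (e1 e2 : nat -> V -> Prop) x (T1 T2 : V -> Prop) :
  (forall y v, e1 y v -> e2 y v) -> (forall v, T1 v -> T2 v) ->
  forall y v, upd e1 x T1 y v -> upd e2 x T2 y v.
Proof. intros He HT y v; unfold upd; destruct (Nat.eqb y x); auto. Qed.

Lemma upd_comp (V' V : Type) (h : V' -> V) (e' : nat -> V' -> Prop)
  (e : nat -> V -> Prop) x (T : V -> Prop) :
  (forall y a, e' y a <-> e y (h a)) ->
  forall y a, upd e' x (fun b => T (h b)) y a <-> upd e x T y (h a).
Proof. intros He y a; unfold upd; destruct (Nat.eqb y x); [reflexivity | apply He]. Qed.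

Lemma sem_mono (A : Type) (N : sstruct A) (f : form A) :
  forall e1 e2 : nat -> vert N -> Prop, (forall y v, e1 y v -> e2 y v) ->
  forall v, sem N e1 f v -> sem N e2 f v.
Proof.
  induction f as [| | R | R | y | f1 IH1 f2 IH2 | f1 IH1 f2 IH2 | g IH | g IH
                 | x g IH | x g IH]; intros e1 e2 He v; simpl; auto.
  - intros [H1 H2]; split; eauto.
  - intros [H1 | H2]; [left | right]; eauto.
  - intros [w [Hvw Hw]]; exists w; split; eauto.
  - intros H w Hvw; eauto.
  - intros H T HT; apply H; intros w Hw; apply HT.
    apply (IH (upd e1 x T)); [apply upd_mono; auto | exact Hw].
  - intros [T [HT Hv]]; exists T; split; [intros w Hw | exact Hv].
    apply (IH (upd e1 x T)); [apply upd_mono; auto | auto].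
Qed.

Lemma sem_bounded_morphism (A : Type) (N' N : sstruct A) (h : vert N' -> vert N) :
  bounded_morphism h ->
  forall (f : form A) e e', (forall y a, e' y a <-> e y (h a)) ->
  forall a, sem N' e' f a <-> sem N e f (h a).
Proof.
  intros [Hforth Hback Hlab] f.
  induction f as [| | R | R | y | f1 IH1 f2 IH2 | f1 IH1 f2 IH2 | g IH | g IH
                 | x g IH | x g IH]; intros e e' He a; simpl.
  - tauto.
  - tauto.
  - apply Hlab.
  - rewrite Hlab; tauto.
  - apply He.
  - rewrite (IH1 e e' He) (IH2 e e' He); tauto.
  - rewrite (IH1 e e' He) (IH2 e e' He); tauto.
  - split.
    + intros [b [Hab Hb]]; exists (h b); split; auto; apply (IH e e' He); auto.
    + intros [w [Hw Hgw]]; destruct (Hback a w Hw) as [b [Hab <-]].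
      exists b; split; auto; apply (IH e e' He); auto.
  - split.
    + intros H w Hw; destruct (Hback a w Hw) as [b [Hab <-]].
      apply (IH e e' He); auto.
    + intros H b Hab; apply (IH e e' He); auto.
  - split.
    + intros H T HT; apply (H (fun b => T (h b))); intros b Hb.
      apply HT; apply (IH (upd e x T) (upd e' x (fun b => T (h b)))); auto.
      apply upd_comp; exact He.
    + (* A prefixed point [T'] in [N'] yields the prefixed point of those
         vertices of [N] all of whose preimages lie in [T']. *)
      intros H T' HT'.
      set T := fun w => forall b, h b = w -> T' b.
      enough (HTa : T (h a)) by (apply HTa; reflexivity).
      apply H; intros w Hw b <-; apply HT'.
      apply (@sem_mono _ _ _ (upd e' x (fun b => T (h b)))).
      { apply upd_mono; auto. }
      apply (IH (upd e x T)); auto.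
      apply upd_comp; exact He.
  - split.
    + intros [T' [HT' Ha]].
      set T := fun w => exists b, h b = w /\ T' b.
      exists T; split; [| exists a; auto].
      intros w [b [<- Hb]].
      apply (IH (upd e x T) (upd e' x (fun b => T (h b)))).
      { apply upd_comp; exact He. }
      apply (@sem_mono _ _ _ (upd e' x T')); auto.
      apply upd_mono; [auto | intros c Hc; exists c; auto].
    + intros [T [HT Ha]]; exists (fun b => T (h b)); split; auto.
      intros b Hb; apply (IH (upd e x T)); auto.
      apply upd_comp; exact He.
Qed.

Lemma In_nth (T : Type) (s : seq T) i (d : T) : i < size s -> List.In (nth d s i) s.
Proof. revert i; induction s as [| x s IH]; intros [| i]; simpl; auto; discriminate. Qed.

Lemma bounded_morphism_mark (A : Type) (N' N : sstruct A) (h : vert N' -> vert N)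
  (Pbar : seq A) (X' : seq (vert N')) :
  bounded_morphism h ->
  (forall a x, List.In x X' -> h a = h x -> a = x) ->
  bounded_morphism (N' := mark N' Pbar X') (N := mark N Pbar (map h X')) h.
Proof.
  intros [Hforth Hback Hlab] Hinj; split; [exact Hforth | exact Hback |].
  intros R a; simpl; rewrite size_map Hlab.
  split; intros [H | [i [HiX [HiP [HR Ha]]]]]; auto; right; exists i;
    repeat split; auto; rewrite (nth_map a) in Ha |- *; auto.
  - rewrite Ha; reflexivity.
  - symmetry; apply Hinj; [apply In_nth | symmetry]; auto.
Qed.

Lemma tp_bounded_morphism (A : Type) (L : form A -> Prop) (Pbar : seq A)
  (N' N : sstruct A) (h : vert N' -> vert N) (X' : seq (vert N')) :
  bounded_morphism h ->
  (forall a x, List.In x X' -> h a = h x -> a = x) ->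
  forall a psi, tp L Pbar N' a X' psi <-> tp L Pbar N (h a) (map h X') psi.
Proof.
  intros Hh Hinj a psi; unfold tp, sat.
  rewrite (sem_bounded_morphism (bounded_morphism_mark Pbar Hh Hinj) psi
             (e := fun _ _ => False)); [reflexivity | tauto].
Qed.

Lemma In_map_inl (T U : Type) (s : seq T) (u : T) :
  List.In (@inl T U u) (map inl s) <-> List.In u s.
Proof.
  induction s as [| x s IH]; simpl; [tauto |].
  rewrite IH; split; intros [H | H]; auto; left; congruence.
Qed.

Lemma eq_map_In (T U : Type) (f g : T -> U) (s : seq T) :
  (forall x, List.In x s -> f x = g x) -> map f s = map g s.
Proof.
  induction s as [| x s IH]; intros H; simpl; [reflexivity |].
  rewrite H ?IH; [reflexivity | | left]; auto.
  intros y Hy; apply H; right; exact Hy.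
Qed.

Lemma dsep_intro (A : Type) (N : sstruct A) (T1 T2 : vert N -> Prop)
  (Y : seq (vert N)) :
  (forall v, T1 v \/ T2 v) ->
  (forall y, List.In y Y -> T1 y /\ T2 y) ->
  (forall v, T1 v -> T2 v -> List.In v Y) ->
  (forall u w, edge N u w -> T2 u -> ~ List.In u Y -> T1 w -> ~ List.In w Y -> False) ->
  dsep N T1 T2 Y.
Proof.
  intros Hcover Hint Hmeet Hedge; split; [split | exact Hmeet | exact Hedge];
    [exact Hcover | exact Hint | |].
  - intros u w Huw H2u H1u H1w H2w.
    apply (Hedge u w Huw H2u); [intros Hu | exact H1w | intros Hw];
      [apply H1u | apply H2w]; apply Hint; assumption.
  - intros u w _ H1u H2u Hu; exfalso; exact (Hu (Hmeet u H1u H2u)).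
Qed.

Section Split.

Variables (A : Type) (M : sstruct A) (S1 S2 : vert M -> Prop) (X : seq (vert M)).

Definition duplicated (v : vert M) : Prop := S1 v /\ S2 v /\ ~ List.In v X.

Definition split_vert : Type := (vert M + {v : vert M | duplicated v})%type.

Definition unsplit (a : split_vert) : vert M :=
  match a with inl u => u | inr y => proj1_sig y end.

Definition split_edge (a b : split_vert) : Prop :=
  match a, b with
  | inl u, inl w => edge M u w /\ ~ (S2 u /\ ~ S1 u /\ duplicated w)
  | inl u, inr y => edge M u (proj1_sig y) /\ ((S2 u /\ ~ S1 u) \/ List.In u X)
  | inr y, inl w => edge M (proj1_sig y) w /\ ~ duplicated w
  | inr y, inr z => edge M (proj1_sig y) (proj1_sig z)
  end.

Definition split_struct : sstruct A :=
  SStruct split_vert split_edge (fun R a => lab M R (unsplit a)).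

Definition split_side1 (a : split_vert) : Prop :=
  match a with inl v => S1 v | inr _ => False end.

Definition split_side2 (a : split_vert) : Prop :=
  match a with inl v => S2 v /\ ~ duplicated v | inr _ => True end.

Definition to_side2 (v : vert M) : split_vert :=
  match excluded_middle_informative (duplicated v) with
  | left p => inr (exist _ v p)
  | right _ => inl v
  end.

Lemma unsplit_to_side2 v : unsplit (to_side2 v) = v.
Proof. unfold to_side2; destruct (excluded_middle_informative (duplicated v)); reflexivity. Qed.

Lemma unsplit_bounded_morphism : bounded_morphism (N' := split_struct) unsplit.
Proof.
  split; [| | reflexivity].
  - intros [u | y] [w | z]; simpl; tauto.
  - intros [u | [y Hy]] w; simpl; intros Hw.
    + destruct (classic (S2 u /\ ~ S1 u /\ duplicated w)) as [C | C].
      * exists (inr (exist _ w (proj2 (proj2 C)))); simpl; tauto.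
      * exists (inl w); simpl; auto.
    + destruct (classic (duplicated w)) as [C | C].
      * exists (inr (exist _ w C)); simpl; auto.
      * exists (inl w); simpl; auto.
Qed.

Lemma unsplit_injective_at_interface a x :
  List.In x (map inl X) -> unsplit a = unsplit x -> a = x.
Proof.
  intros Hx; apply List.in_map_iff in Hx as [u [Hux Hu]]; subst x.
  destruct a as [w | [y Hy]]; simpl; intros E; [congruence |].
  subst y; exfalso; exact (proj2 (proj2 Hy) Hu).
Qed.

Lemma tp_split (L : form A -> Prop) (Pbar : seq A) a psi :
  tp L Pbar split_struct a (map inl X) psi <-> tp L Pbar M (unsplit a) X psi.
Proof.
  rewrite (tp_bounded_morphism L Pbar unsplit_bounded_morphism
             unsplit_injective_at_interface).
  rewrite -map_comp map_id; reflexivity.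
Qed.

Lemma map_to_side2_interface : map to_side2 X = map inl X.
Proof.
  apply eq_map_In; intros x Hx; unfold to_side2.
  destruct (excluded_middle_informative (duplicated x)) as [Hd | _];
    [exfalso; exact (proj2 (proj2 Hd) Hx) | reflexivity].
Qed.

Section SplitSeparation.

Hypothesis HW : weak_dsep M S1 S2 X.

Lemma split_sides_cover a : split_side1 a \/ split_side2 a.
Proof.
  destruct HW as [Hcover _ _ _]; destruct a as [v | y]; simpl; auto.
  destruct (classic (duplicated v)) as [Hd | Hd]; [left; apply Hd |].
  destruct (Hcover v); tauto.
Qed.

Lemma split_interface_sides a :
  List.In a (map inl X) -> split_side1 a /\ split_side2 a.
Proof.
  destruct HW as [_ Hint _ _]; intros Ha.
  apply List.in_map_iff in Ha as [x [Hxa Hx]]; subst a; simpl.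
  unfold duplicated; destruct (Hint x Hx); tauto.
Qed.

Lemma split_sides_meet a :
  split_side1 a -> split_side2 a -> List.In a (map inl X).
Proof.
  destruct a as [v | y]; simpl; [intros H1 [H2 Hd] | tauto].
  apply In_map_inl, NNPP; intros Hv; apply Hd; unfold duplicated; tauto.
Qed.

Lemma split_no_back_edge a b :
  split_edge a b -> split_side2 a -> ~ List.In a (map inl X) ->
  split_side1 b -> ~ List.In b (map inl X) -> False.
Proof.
  destruct HW as [_ _ Hsep2 Hsep1].
  destruct a as [u | [y Hy]], b as [w | z]; simpl; try tauto;
    rewrite ?In_map_inl; unfold duplicated in *.
  - intros [Huw Hn] [H2u Hdu] Hu H1w Hw.
    assert (H1u : ~ S1 u) by tauto.
    destruct (classic (S2 w)) as [H2w | H2w]; [tauto |].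
    exact (Hsep2 u w Huw H2u H1u H1w H2w).
  - intros [Hyw Hn] _ _ H1w Hw; destruct Hy as [H1y [H2y Hy]].
    destruct (classic (S2 w)) as [H2w | H2w]; [tauto |].
    exact (Hsep1 y w Hyw H1y H2y Hy H1w H2w).
Qed.

Lemma split_dsep : dsep split_struct split_side1 split_side2 (map inl X).
Proof.
  apply dsep_intro; [exact split_sides_cover | exact split_interface_sides
                    | exact split_sides_meet | exact split_no_back_edge].
Qed.

End SplitSeparation.

Lemma iso_on_side1 (sigma : A -> Prop) : iso_on sigma M split_struct S1 split_side1 inl.
Proof.
  split; simpl; try tauto.
  - intros u v _ _ E; congruence.
  - intros [v | y] Hv; [exists v; auto | contradiction].
Qed.

Lemma iso_on_side2 (sigma : A -> Prop) :
  iso_on sigma M split_struct S2 split_side2 to_side2.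
Proof.
  split.
  - intros v Hv; unfold to_side2.
    destruct (excluded_middle_informative (duplicated v)); simpl; auto.
  - intros u v _ _ E; rewrite <- (unsplit_to_side2 u), <- (unsplit_to_side2 v), E.
    reflexivity.
  - intros [v | [y Hy]] Hv; simpl in Hv.
    + exists v; split; [tauto |]; unfold to_side2.
      destruct (excluded_middle_informative (duplicated v)); tauto.
    + exists y; split; [exact (proj1 (proj2 Hy)) |]; unfold to_side2.
      destruct (excluded_middle_informative (duplicated y)) as [Hy' | Hy']; [| tauto].
      rewrite (proof_irrelevance _ Hy' Hy); reflexivity.
  - intros u v Hu Hv; unfold to_side2.
    destruct (excluded_middle_informative (duplicated u)) as [Hdu | Hdu];
      destruct (excluded_middle_informative (duplicated v)) as [Hdv | Hdv];
      simpl; try tauto.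
    split; [intros Huv; split; [exact Huv |] | tauto].
    destruct (classic (S1 u)); [right | left; tauto].
    apply NNPP; intros Hn; apply Hdu; unfold duplicated; tauto.
  - intros R u _ _; simpl; rewrite unsplit_to_side2; reflexivity.
Qed.

End Split.

Arguments split_side1 {A M} S1 S2 X a.
Arguments split_side2 {A M} S1 S2 X a.

Theorem theorem4p2 (A : Type) (sigma : A -> Prop) (Pbar : seq A)
  (L : form A -> Prop) (M : sstruct A) (S1 S2 : vert M -> Prop)
  (X : seq (vert M)) :
  (forall R, List.In R Pbar -> ~ sigma R) ->
  (forall phi, L phi -> atoms_in (fun R => sigma R \/ List.In R Pbar) phi) ->
  weak_dsep M S1 S2 X ->
  size X <= size Pbar ->
  exists (M' : sstruct A) (S1' S2' : vert M' -> Prop) (X' : seq (vert M'))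
         (pi1 pi2 : vert M -> vert M'),
    [/\ X' = map pi1 X /\ X' = map pi2 X,
        dsep M' S1' S2' X',
        iso_on sigma M M' S1 S1' pi1 /\ iso_on sigma M M' S2 S2' pi2,
        (forall v, S1 v -> forall psi, tp L Pbar M v X psi <-> tp L Pbar M' (pi1 v) X' psi) &
        (forall v, S2 v -> forall psi, tp L Pbar M v X psi <-> tp L Pbar M' (pi2 v) X' psi)].
Proof.
  (* The types agree on all formulas. *)
  intros _ _ HW _.
  exists (split_struct S1 S2 X), (split_side1 S1 S2 X), (split_side2 S1 S2 X),
    (map inl X), inl, (to_side2 S1 S2 X).
  split.
  - split; [reflexivity | symmetry; apply map_to_side2_interface].
  - apply split_dsep; exact HW.
  - split; [apply iso_on_side1 | apply iso_on_side2].
  - intros v _ psi; symmetry; apply tp_split.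
  - intros v _ psi; rewrite tp_split unsplit_to_side2; reflexivity.
Qed.
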